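(* For every function $f_1:\mathbb{N}\times\mathbb{N}\to\mathbb{N}$ there exists a function $f_2:\mathbb{N}\times\mathbb{N}\to\mathbb{N}$ with $f_2\ge f_1$ such that the following holds. Let $G=(V,E)$ be a graph of pathwidth $\mathrm{pw}$ and maximum degree $\Delta$, let $F\subseteq V$ be a set of initially burned vertices with $|F|\le f_1(\mathrm{pw},\Delta)$, and let the budget be any $b\ge1$. Then there exists a protection strategy for the firefighter process on $G$ started from the burned set $F$ such that at most $f_2(\mathrm{pw},\Delta)$ vertices are burned at the end of the process.
   Context: Firefighter process with initial burned set $F$: at step $t=0$ all vertices of $F$ are burned. At every step $t>0$: (1) protection phase: at most $b$ vertices not yet burned become protected; (2) spreading phase: every unprotected vertex adjacent to a burned vertex becomes burned. Burned and protected vertices stay so; the process stops when no new vertex can become burned. A protection strategy specifies which vertices to protect at each step. Pathwidth and maximum degree are the standard notions. *)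

From mathcomp Require Import all_boot.
Set Implicit Arguments. Unset Strict Implicit. Unset Printing Implicit Defensive.

Section Graphs.
Variable T : finType.
Variable e : rel T.

Definition simple_graph : Prop := symmetric e /\ irreflexive e.

Definition max_degree : nat := \max_(v : T) #|[set u | e v u]|.

Definition bag (bags : seq {set T}) (i : nat) : {set T} := nth set0 bags i.

Definition is_path_decomposition (bags : seq {set T}) : Prop :=
  [/\ (forall v : T, has (fun B : {set T} => v \in B) bags),
      (forall u v : T, e u v -> has (fun B : {set T} => (u \in B) && (v \in B)) bags)
    & (forall (v : T) (i j k : nat), i <= j -> j <= k ->
          v \in bag bags i -> v \in bag bags k -> v \in bag bags j)].

Definition pd_width (bags : seq {set T}) : nat := (\max_(B <- bags) #|B|).-1.

Definition is_pathwidth (pw : nat) : Prop :=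
  (exists bags, is_path_decomposition bags /\ pd_width bags = pw) /\
  (forall bags, is_path_decomposition bags -> pw <= pd_width bags).

(* Firefighter process. A strategy S gives the set S t protected at step t>0
   (S 0 is ignored).  ff_state F S t = (burned set, protected set) after step t. *)
Fixpoint ff_state (F : {set T}) (S : nat -> {set T}) (t : nat) : {set T} * {set T} :=
  match t with
  | 0 => (F, set0)
  | t'.+1 =>
      let (B, P) := ff_state F S t' in
      let P' := P :|: S t in
      (B :|: [set v | (v \notin P') && [exists u in B, e u v]], P')
  end.

Definition burned (F : {set T}) (S : nat -> {set T}) (t : nat) : {set T} :=
  (ff_state F S t).1.

Definition valid_strategy (F : {set T}) (b : nat) (S : nat -> {set T}) : Prop :=
  forall t : nat, #|S t.+1| <= b /\ [disjoint S t.+1 & burned F S t].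

End Graphs.

From mathcomp Require Import all_boot.
From mathcomp Require Import zify.
Set Implicit Arguments. Unset Strict Implicit. Unset Printing Implicit Defensive.

(* A path decomposition of width pw orders the vertices (by first bag) so
   that every cut, i.e. the set of edges jumping over a gap of the order,
   has at most (pw+1)*Delta edges: all their left endpoints share a bag.
   We then show, by induction on a bound c for the cuts, that protecting one
   vertex per step keeps the fire below [fire_bound c Delta k] when at most
   k vertices burn initially.  If c = 0 the graph has no edges.  Otherwise
   let [core] be the ball of radius h = 4kc around the fire; around each
   initial fire f the nearest gaps whose cut avoids the core bound a window.
   The at most h endpoints of the boundary cuts (the gate) lie outside the
   core, so they are all protected before the fire arrives and the fire is
   confined to the windows.  After h steps the remaining windows, without
   core and gate, form a graph whose cuts each lost an edge touching the
   core; the induction hypothesis applies to it with the fire entering from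
   the core. *)

Lemma card_bigcup_le (I T : finType) (A : {pred I}) (f : I -> {set T}) :
  #|\bigcup_(i in A) f i| <= \sum_(i in A) #|f i|.
Proof.
elim/big_rec2: _ => [|i n U _ IH]; first by rewrite cards0.
by rewrite (leq_trans (leq_card_setU _ _)) // leq_add2l.
Qed.

Lemma card_nbhd_le (T : finType) (e : rel T) (D : nat) (A : {set T}) :
  (forall v, #|[set u | e v u]| <= D) ->
  #|\bigcup_(u in A) [set v | e u v]| <= #|A| * D.
Proof.
move=> hD; apply: (leq_trans (card_bigcup_le _ _)).
by rewrite -sum_nat_const; apply: leq_sum => u _; exact: hD.
Qed.

Section Firefighting.
Variables (T : finType) (e : rel T).
Implicit Types (F : {set T}) (S : nat -> {set T}).

Definition protected_set S t : {set T} := \bigcup_(j < t) S j.+1.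

Lemma ff_state_protected F S t : (ff_state e F S t).2 = protected_set S t.
Proof.
elim: t => [|t IH] /=; first by rewrite /protected_set big_ord0.
case E: (ff_state e F S t) IH => [B P] /= ->.
by rewrite /protected_set big_ord_recr.
Qed.

Lemma burnedSP F S t v : reflect (v \in burned e F S t \/
   (v \notin protected_set S t.+1 /\ exists2 u, u \in burned e F S t & e u v))
   (v \in burned e F S t.+1).
Proof.
have -> : burned e F S t.+1 = burned e F S t :|:
    [set v | (v \notin protected_set S t.+1) && [exists u in burned e F S t, e u v]].
  rewrite /burned /=; have := ff_state_protected F S t.
  by case: (ff_state e F S t) => B P /= ->; rewrite /protected_set big_ord_recr.
rewrite inE in_set.
apply: (iffP orP) => [[->|/andP[h /exists_inP[u hu huv]]]|[->|[h [u hu huv]]]].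
- by left.
- by right; split=> //; exists u.
- by left.
- by right; rewrite h; apply/exists_inP; exists u.
Qed.

Lemma burned_mono F S t1 t2 : t1 <= t2 -> burned e F S t1 \subset burned e F S t2.
Proof.
move=> le; rewrite -(subnKC le); elim: (t2 - t1) => [|d IH]; first by rewrite addn0.
by rewrite addnS (subset_trans IH) //; apply/subsetP => v hv; apply/burnedSP; left.
Qed.

Lemma protected_mono S t1 t2 : t1 <= t2 -> protected_set S t1 \subset protected_set S t2.
Proof.
move=> le; rewrite -(subnKC le); elim: (t2 - t1) => [|d IH]; first by rewrite addn0.
by rewrite addnS (subset_trans IH) // /protected_set big_ord_recr subsetUl.
Qed.

Definition fire_ball F t := burned e F (fun _ => set0) t.

Lemma burned_sub_ball F S t : burned e F S t \subset fire_ball F t.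
Proof.
elim: t => [|t IH] //; apply/subsetP => v /burnedSP [h|[_ [u hu huv]]]; apply/burnedSP.
  by left; apply: (subsetP IH).
right; split; last by exists u => //; apply: (subsetP IH).
by rewrite /protected_set big1 ?inE.
Qed.

Lemma fire_ball_card F D : (forall v, #|[set u | e v u]| <= D) ->
  forall t, #|fire_ball F t| <= #|F| * D.+1 ^ t.
Proof.
move=> hD; elim => [|t IH]; first by rewrite expn0 muln1.
have grow : fire_ball F t.+1 \subset
    fire_ball F t :|: \bigcup_(u in fire_ball F t) [set v | e u v].
  apply/subsetP => v /burnedSP [h|[_ [u hu huv]]]; rewrite inE; first by rewrite h.
  by apply/orP; right; apply/bigcupP; exists u => //; rewrite inE.
apply: (leq_trans (subset_leq_card grow)); apply: (leq_trans (leq_card_setU _ _)).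
apply: (@leq_trans (#|fire_ball F t| * D.+1)).
  by rewrite mulnS leq_add2l card_nbhd_le.
by rewrite expnS mulnCA mulnC leq_mul2l IH orbT.
Qed.

Lemma protected_in_time F S v t0 : v \notin fire_ball F t0 -> v \in protected_set S t0 ->
  forall t, v \notin burned e F S t.
Proof.
move=> far pr t.
have nb0 : v \notin burned e F S t0.
  by apply: contra far; apply/subsetP/burned_sub_ball.
case: (leqP t t0) => [le|lt]; first by apply: contra nb0; apply/subsetP/burned_mono.
rewrite -(subnKC (ltnW lt)); elim: (t - t0) => [|d IH]; first by rewrite addn0.
rewrite addnS; apply/negP => /burnedSP [h|[h _]]; first by rewrite h in IH.
by move: h; rewrite (subsetP (protected_mono S (leqW (leq_addr d t0))) v pr).
Qed.

End Firefighting.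

Lemma max_degree_ge (T : finType) (e : rel T) (v : T) :
  #|[set u | e v u]| <= max_degree e.
Proof. exact: (leq_bigmax (F := fun v => #|[set u | e v u]|) v). Qed.

Lemma valid_strategy_budget (T : finType) (e : rel T) (F : {set T}) (b : nat)
  (S : nat -> {set T}) : 1 <= b -> valid_strategy e F 1 S -> valid_strategy e F b S.
Proof. by move=> hb hS t; case: (hS t) => h1 h2; split=> //; exact: leq_trans h1 hb. Qed.

Definition cut (T : finType) (e : rel T) (pos : T -> nat) (g : nat) : {set T * T} :=
  [set uv | e uv.1 uv.2 && (pos uv.1 <= g < pos uv.2)].

Section PathDecompositionOrder.
Variables (T : finType) (e : rel T) (bags : seq {set T}).
Hypothesis hdec : is_path_decomposition e bags.

Definition first_bag (v : T) : nat := find (fun B : {set T} => v \in B) bags.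

(* Order the vertices by first bag, breaking ties by the enumeration of [T];
   positions start at 1 so that gap 0 is never cut. *)
Definition pd_pos (v : T) : nat := (first_bag v * #|T| + enum_rank v).+1.

Lemma first_bagP v : v \in bag bags (first_bag v).
Proof. by case: hdec => hcov _ _; exact: (nth_find set0 (hcov v)). Qed.

Lemma first_bag_min v i : v \in bag bags i -> first_bag v <= i.
Proof.
move=> hv; rewrite leqNgt; apply/negP => lt.
by have := before_find set0 lt; rewrite /bag in hv; rewrite hv.
Qed.

Lemma pd_pos_gt0 v : 0 < pd_pos v.
Proof. by []. Qed.

Lemma pd_pos_inj : injective pd_pos.
Proof.
move=> x y [E]; apply: enum_rank_inj; apply: val_inj => /=.
by have := congr1 (modn^~ #|T|) E; rewrite !modnMDl !modn_small.
Qed.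

Lemma pd_pos_mono x y : pd_pos x <= pd_pos y -> first_bag x <= first_bag y.
Proof.
move=> hxy; rewrite leqNgt; apply/negP => lt.
have h1 : (first_bag y).+1 * #|T| <= first_bag x * #|T| by rewrite leq_mul2r lt orbT.
have rx : enum_rank x < #|T| := ltn_ord _.
have ry : enum_rank y < #|T| := ltn_ord _.
move: hxy; rewrite /pd_pos mulSn in h1 *; lia.
Qed.

(* The key property of a path decomposition: the left endpoints of all the
   edges of a cut lie in a single bag, namely the first bag of the leftmost
   vertex to the right of the gap. *)
Lemma cut_tails_in_bag g : exists j, forall u v, (u, v) \in cut e pd_pos g -> u \in bag bags j.
Proof.
case: hdec => _ hedge hint.
case: (set_0Vmem (cut e pd_pos g)) => [cut0|[uv0 huv0]].
  by exists 0 => u v; rewrite cut0 inE.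
have g0 : g < pd_pos uv0.2 by move: huv0; rewrite inE => /andP[_ /andP[]].
case: (@arg_minnP _ uv0.2 (fun x => g < pd_pos x) pd_pos g0) => w gw wmin.
exists (first_bag w) => u v; rewrite inE /= => /andP[huv /andP[hug hgv]].
have fuw : first_bag u <= first_bag w by apply/pd_pos_mono/ltnW/(leq_ltn_trans hug gw).
have fwv : first_bag w <= first_bag v by apply/pd_pos_mono/wmin.
case/(has_nthP set0): (hedge u v huv) => i _ /andP[ui vi].
apply: (hint u (first_bag u) _ i fuw _ (first_bagP u) ui).
exact: (leq_trans fwv (first_bag_min vi)).
Qed.

Lemma bag_card_le j : #|bag bags j| <= (pd_width bags).+1.
Proof.
case: (ltnP j (size bags)) => hj; last by rewrite /bag nth_default // cards0.
apply: (leq_trans _ (leqSpred _)).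
exact: (@leq_bigmax_seq _ bags predT (fun B : {set T} => #|B|) _ (mem_nth set0 hj) isT).
Qed.

Lemma pd_cut_card D g : (forall v, #|[set u | e v u]| <= D) ->
  #|cut e pd_pos g| <= (pd_width bags).+1 * D.
Proof.
move=> hD; have [j tails] := cut_tails_in_bag g.
have sub : cut e pd_pos g \subset \bigcup_(u in bag bags j) [set (u, v) | v in [set v | e u v]].
  apply/subsetP => [[u v]] huv; apply/bigcupP; exists u; first exact: tails huv.
  by apply/imsetP; exists v => //; move: huv; rewrite !inE => /andP[].
apply: (leq_trans (subset_leq_card sub)); apply: (leq_trans (card_bigcup_le _ _)).
apply: (@leq_trans (\sum_(u in bag bags j) D)).
  by apply: leq_sum => u _; apply: (leq_trans (leq_imset_card _ _)); exact: hD.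
by rewrite sum_nat_const leq_mul2r bag_card_le orbT.
Qed.

End PathDecompositionOrder.

(* The bound on the fire when every cut has at most [c] edges, the maximum
   degree is at most [D] and at most [k] vertices burn initially.  It follows
   the induction below: the ball of radius 4kc, plus the bound for the
   instance with one edge less per cut whose initial fire is the set of
   neighbours of that ball. *)
Fixpoint fire_bound (c D k : nat) : nat :=
  match c with
  | 0 => k
  | c'.+1 => k * D.+1 ^ (4 * k * c) + fire_bound c' D (k * D.+1 ^ (4 * k * c) * D)
  end.

Definition containable (T : finType) (pos : T -> nat) (D c : nat) : Prop :=
  forall (e : rel T) (k : nat) (F : {set T}),
  symmetric e -> irreflexive e ->
  (forall v, #|[set u | e v u]| <= D) -> (forall g, #|cut e pos g| <= c) -> #|F| <= k ->
  exists S, valid_strategy e F 1 S /\ forall t, #|burned e F S t| <= fire_bound c D k.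

(* Without cut edges there are no edges at all, so the fire never spreads. *)
Lemma containable0 (T : finType) (pos : T -> nat) (D : nat) :
  injective pos -> containable pos D 0.
Proof.
move=> pinj e k F esym eirr _ hc hF.
have noe u v : ~~ e u v.
  apply/negP => huv; have neq : u != v by apply: contraTneq huv => ->; rewrite eirr.
  have cut0 g : cut e pos g = set0 by apply/eqP; rewrite -cards_eq0 -leqn0.
  move: neq; rewrite -(inj_eq pinj) neq_ltn => /orP [lt|lt].
  - by move: (cut0 (pos u)) => /setP/(_ (u, v)); rewrite !inE /= huv leqnn lt.
  - by move: (cut0 (pos v)) => /setP/(_ (v, u)); rewrite !inE /= esym huv leqnn lt.
exists (fun _ => set0); split.
  by move=> t; rewrite cards0 disjoint_subset; split=> //; apply/subsetP => x; rewrite inE.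
have still t : burned e F (fun _ => set0) t = F.
  elim: t => [|t IH] //; apply/setP => v; apply/burnedSP/idP => [[|[_ [u _ huv]]]|h].
  - by rewrite IH.
  - by rewrite (negbTE (noe u v)) in huv.
  - by left; rewrite IH.
by move=> t; rewrite still.
Qed.

Section OneRound.
Variables (T : finType) (pos : T -> nat) (D c : nat) (e : rel T) (k : nat) (F : {set T}).
Hypotheses (esym : symmetric e) (eirr : irreflexive e)
  (pos_gt0 : forall v, 0 < pos v) (hD : forall v, #|[set u | e v u]| <= D)
  (hcut : forall g, #|cut e pos g| <= c.+1) (hF : #|F| <= k).

(* Length of the first phase, during which the fire stays in [core]. *)
Definition horizon : nat := 4 * k * c.+1.

Definition core : {set T} := fire_ball e F horizon.

Definition core_bound : nat := k * D.+1 ^ horizon.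

Lemma core_card : #|core| <= core_bound.
Proof. by apply: (leq_trans (fire_ball_card F hD _)); rewrite leq_mul2r hF orbT. Qed.

Definition safe_gap (g : nat) : bool :=
  [forall uv in cut e pos g, (uv.1 \notin core) && (uv.2 \notin core)].

(* Gap 0 and the gaps past the last position have empty cuts, so safe gaps
   exist on both sides of every vertex. *)
Lemma safe_gap0 : safe_gap 0.
Proof.
apply/forall_inP => uv; rewrite inE => /andP[_ /andP[h _]].
by have := pos_gt0 uv.1; rewrite ltnNge h.
Qed.

Lemma safe_gap_far g : \max_(v : T) pos v <= g -> safe_gap g.
Proof.
move=> hg; apply/forall_inP => uv; rewrite inE => /andP[_ /andP[_ h]].
by have := leq_ltn_trans (leq_bigmax uv.2) (leq_ltn_trans hg h); rewrite ltnn.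
Qed.

Lemma safe_right_exists f : exists g, (pos f <= g) && safe_gap g.
Proof. by exists (pos f + \max_(v : T) pos v); rewrite leq_addr safe_gap_far // leq_addl. Qed.

Lemma safe_left_exists f : exists g, (g < pos f) && safe_gap g.
Proof. by exists 0; rewrite pos_gt0 safe_gap0. Qed.

Lemma safe_left_bounded f g : (g < pos f) && safe_gap g -> g <= pos f.
Proof. by case/andP=> /ltnW. Qed.

Definition right_gap (f : T) : nat := ex_minn (safe_right_exists f).
Definition left_gap (f : T) : nat := ex_maxn (safe_left_exists f) (@safe_left_bounded f).

Lemma right_gapP f : [/\ pos f <= right_gap f, safe_gap (right_gap f)
  & forall g, pos f <= g < right_gap f -> ~~ safe_gap g].
Proof.
rewrite /right_gap; case: ex_minnP => m /andP[h1 h2] hmin; split=> // g /andP[g1 g2].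
by apply: contraTN g2 => gs; rewrite -leqNgt hmin ?g1.
Qed.

Lemma left_gapP f : [/\ left_gap f < pos f, safe_gap (left_gap f)
  & forall g, left_gap f < g < pos f -> ~~ safe_gap g].
Proof.
rewrite /left_gap; case: ex_maxnP => m /andP[h1 h2] hmax; split=> // g /andP[g1 g2].
by apply: contraTN g1 => gs; rewrite -leqNgt hmax ?g2.
Qed.

Lemma unsafe_in_window f g : left_gap f < g < right_gap f -> ~~ safe_gap g.
Proof.
case/andP=> hl hr; case: (ltnP g (pos f)) => hgf.
  by case: (left_gapP f) => _ _; apply; rewrite hl hgf.
by case: (right_gapP f) => _ _; apply; rewrite hgf hr.
Qed.

Definition window (f x : T) : bool := (left_gap f < pos x) && (pos x <= right_gap f).

Definition region : {set T} := [set x | [exists f in F, window f x]].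

Definition gap_ends (g : nat) : {set T} :=
  [set uv.1 | uv in cut e pos g] :|: [set uv.2 | uv in cut e pos g].

Definition gate : {set T} :=
  \bigcup_(f in F) (gap_ends (left_gap f) :|: gap_ends (right_gap f)).

Lemma gap_ends_card g : #|gap_ends g| <= 2 * c.+1.
Proof.
apply: (leq_trans (leq_card_setU _ _)).
by rewrite mul2n -addnn; apply: leq_add; exact: (leq_trans (leq_imset_card _ _) (hcut g)).
Qed.

(* The gate is small enough to be protected one vertex per step ... *)
Lemma gate_card : #|gate| <= horizon.
Proof.
apply: (leq_trans (card_bigcup_le _ _)).
apply: (@leq_trans (\sum_(f in F) (4 * c.+1))).
  apply: leq_sum => f _; apply: (leq_trans (leq_card_setU _ _)).
  by rewrite (_ : 4 = 2 + 2) // mulnDl; apply: leq_add; apply: gap_ends_card.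
by rewrite sum_nat_const /horizon [4 * k]mulnC -mulnA leq_mul.
Qed.

(* ... and far enough from [F] for the protection to come in time. *)
Lemma gate_outside_core x : x \in gate -> x \notin core.
Proof.
have ends_safe g : safe_gap g -> x \in gap_ends g -> x \notin core.
  move=> /forall_inP gs; rewrite inE => /orP [] /imsetP [uv huv ->];
  by case/andP: (gs uv huv).
move=> /bigcupP [f _]; rewrite inE => /orP [].
  by apply: ends_safe; case: (left_gapP f).
by apply: ends_safe; case: (right_gapP f).
Qed.

Lemma window_exit f u v : f \in F -> e u v -> window f u -> ~~ window f v ->
  (u \in gate) && (v \in gate).
Proof.
move=> fF huv /andP[hu1 hu2]; rewrite negb_and -!ltnNge => /orP [hv|hv].
  have hx : (v, u) \in cut e pos (left_gap f) by rewrite inE /= esym huv hu1 andbT.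
  by apply/andP; split; apply/bigcupP; exists f => //; rewrite !inE;
    apply/orP; left; apply/orP; [right | left]; apply/imsetP; exists (v, u).
have hx : (u, v) \in cut e pos (right_gap f) by rewrite inE /= huv hu2 hv.
by apply/andP; split; apply/bigcupP; exists f => //; rewrite !inE;
  apply/orP; right; apply/orP; [left | right]; apply/imsetP; exists (u, v).
Qed.

(* The second phase is played on what remains of the windows once the core
   and the gate are removed; the fire re-enters it from the core. *)
Definition rest : {set T} := [set x in region | (x \notin core) && (x \notin gate)].

Definition rest_graph : rel T := [rel u v | [&& e u v, u \in rest & v \in rest]].

Definition rest_fire : {set T} := [set v in rest | [exists u in core, e u v]].

Lemma rest_graph_sym : symmetric rest_graph.
Proof. by move=> u v; rewrite /rest_graph /= esym; congr (_ && _); exact: andbC. Qed.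

Lemma rest_graph_irr : irreflexive rest_graph.
Proof. by move=> u; rewrite /rest_graph /= eirr. Qed.

Lemma rest_graph_deg v : #|[set u | rest_graph v u]| <= D.
Proof.
apply: (leq_trans _ (hD v)); apply: subset_leq_card; apply/subsetP => u.
by rewrite !inE /= => /andP[].
Qed.

Lemma rest_fire_card : #|rest_fire| <= core_bound * D.
Proof.
have sub : rest_fire \subset \bigcup_(u in core) [set v | e u v].
  apply/subsetP => v; rewrite inE => /andP[_ /exists_inP [u hu huv]].
  by apply/bigcupP; exists u => //; rewrite inE.
apply: (leq_trans (subset_leq_card sub)); apply: (leq_trans (card_nbhd_le _ hD)).
by rewrite leq_mul2r core_card orbT.
Qed.

(* The point of the construction: removing the core destroys an edge of every
   cut met by the rest graph, so its cuts have at most [c] edges. *)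
Lemma rest_cut_card g : #|cut rest_graph pos g| <= c.
Proof.
case: (set_0Vmem (cut rest_graph pos g)) => [->|[uv huv]]; first by rewrite cards0.
move: (huv); rewrite inE /= => /andP[/and3P[he uR vR] /andP[hug hgv]].
have unsafe : ~~ safe_gap g.
  move: (uR); rewrite !inE => /and3P[/exists_inP [f fF hfu] _ uG].
  have hfv : window f uv.2.
    by apply/negPn/negP => hn; case/andP: (window_exit fF he hfu hn); rewrite (negbTE uG).
  move: hfu hfv => /andP[h1 _] /andP[_ h2].
  by apply: (@unsafe_in_window f); rewrite (leq_trans h1 hug) (leq_trans hgv h2).
case/forall_inPn: unsafe => uv0 h0 h1.
have sub : cut rest_graph pos g \subset cut e pos g :\ uv0.
  apply/subsetP => w; rewrite !inE /= => /andP[/and3P[hw w1 w2] hw2].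
  rewrite hw hw2 !andbT; apply: contraNneq h1 => wE.
  by move: w1 w2; rewrite wE !inE => /and3P[_ -> _] /and3P[_ -> _].
apply: (leq_trans (subset_leq_card sub)).
by have := hcut g; rewrite (cardsD1 uv0) h0 add1n ltnS.
Qed.

Lemma burned_early S t : t <= horizon -> burned e F S t \subset core.
Proof.
move=> ht; apply: (subset_trans (burned_sub_ball e F S t)).
exact: (burned_mono e F (fun _ => set0) ht).
Qed.

Section TwoPhase.
Variable S' : nat -> {set T}.
Hypothesis S'_valid : valid_strategy rest_graph rest_fire 1 S'.

(* Phase one (steps 1 .. horizon+1): protect the gate, one vertex per step.
   Phase two: follow [S'] on the rest graph, shifted by horizon+1 steps. *)
Definition two_phase (t : nat) : {set T} :=
  if t <= horizon.+1 then [set x in gate | index x (enum gate) == t.-1]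
  else S' (t - horizon.+1) :&: rest.

Lemma gate_protected x : x \in gate -> x \in protected_set two_phase horizon.
Proof.
move=> xG; have hi : index x (enum gate) < horizon.
  by apply: (leq_trans _ gate_card); rewrite cardE index_mem mem_enum.
apply/bigcupP; exists (Ordinal hi) => //.
by rewrite /two_phase /= ltnS (ltnW hi) inE xG /= eqxx.
Qed.

Lemma gate_never_burns x t : x \in gate -> x \notin burned e F two_phase t.
Proof. by move=> xG; apply: (protected_in_time (gate_outside_core xG) (gate_protected xG)). Qed.

(* The fire never leaves the windows, since their exits lie in the gate. *)
Lemma burned_in_region t : burned e F two_phase t \subset region.
Proof.
elim: t => [|t IH].
  apply/subsetP => f fF; rewrite inE; apply/exists_inP; exists f => //.
  by rewrite /window; case: (left_gapP f) => -> _ _; case: (right_gapP f) => -> _ _.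
apply/subsetP => v /burnedSP [h|[_ [u hu huv]]]; first exact: (subsetP IH).
move: (subsetP IH u hu); rewrite inE => /exists_inP [f fF hfu].
rewrite inE; apply/exists_inP; exists f => //; apply/negPn/negP => hn.
by case/andP: (window_exit fF huv hfu hn) => /(gate_never_burns t); rewrite hu.
Qed.

Lemma burned_in_rest t v : v \in burned e F two_phase t -> v \notin core -> v \in rest.
Proof.
move=> hv hc; rewrite inE (subsetP (burned_in_region t) v hv) hc /=.
by apply: contraTN hv => /gate_never_burns.
Qed.

Lemma protected_shift v s : v \in rest -> v \in protected_set S' s ->
  v \in protected_set two_phase (horizon.+1 + s).
Proof.
move=> vR /bigcupP [j _ hj].
have hj' : horizon.+1 + j < horizon.+1 + s by rewrite ltn_add2l.
apply/bigcupP; exists (Ordinal hj') => //=.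
rewrite /two_phase /= ifF; last by apply/negbTE; rewrite -ltnNge ltnS leq_addr.
have -> : (horizon.+1 + j).+1 - horizon.+1 = j.+1 by lia.
by rewrite inE hj vR.
Qed.

Lemma burned_late s :
  burned e F two_phase (horizon.+1 + s) \subset core :|: burned rest_graph rest_fire S' s.
Proof.
have fire0 s' v : v \in rest_fire -> v \in burned rest_graph rest_fire S' s'.
  by move=> hv; apply: (subsetP (burned_mono _ _ _ (leq0n s'))).
elim: s => [|s IH]; apply/subsetP => v hv; rewrite inE;
  case vC: (v \in core) => //=; have vR := burned_in_rest hv (negbT vC).
  have early := subsetP (burned_early two_phase (leqnn horizon)).
  move: hv; rewrite addn0 => /burnedSP [/early|[_ [u /early uC huv]]]; first by rewrite vC.
  by apply: fire0; rewrite inE vR; apply/exists_inP; exists u.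
move: hv; rewrite addnS => /burnedSP [h|[hp [u hu huv]]].
  move: (subsetP IH v h); rewrite inE vC /=.
  exact: (subsetP (burned_mono _ _ _ (leqnSn s))).
case uC: (u \in core).
  by apply: fire0; rewrite inE vR; apply/exists_inP; exists u.
have uR := burned_in_rest hu (negbT uC).
move: (subsetP IH u hu); rewrite inE uC /= => hu'.
apply/burnedSP; right; split; last by exists u => //; rewrite /rest_graph /= huv uR vR.
by apply: contra hp => /(protected_shift vR); rewrite addnS.
Qed.

Lemma two_phase_valid : valid_strategy e F 1 two_phase.
Proof.
move=> t; case: (leqP t.+1 horizon.+1) => h.
  rewrite /two_phase h /=; split.
    apply/card_le1_eqP => x y; rewrite !inE => /andP[xG /eqP xi] /andP[yG /eqP yi].
    by rewrite -(nth_index x (_ : x \in enum gate)) ?mem_enum //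
      -(nth_index x (_ : y \in enum gate)) ?mem_enum // xi yi.
  by rewrite disjoint_subset; apply/subsetP => x; rewrite !inE => /andP[/gate_never_burns].
have early_off : (t.+1 <= horizon.+1) = false by rewrite leqNgt h.
rewrite /two_phase early_off.
have -> : t.+1 - horizon.+1 = (t - horizon.+1).+1 by lia.
have shift : t = horizon.+1 + (t - horizon.+1) by lia.
case: (S'_valid (t - horizon.+1)) => hcard hdis; split.
  exact: (leq_trans (subset_leq_card (subsetIl _ _)) hcard).
rewrite disjoint_subset; apply/subsetP => x; rewrite inE => /andP[xS xR].
apply/negP; rewrite {1}shift => /(subsetP (burned_late _)); rewrite inE => /orP [xC|xB'].
  by move: xR; rewrite inE xC /= andbF.
by move: hdis; rewrite disjoint_subset => /subsetP /(_ x xS); rewrite !inE xB'.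
Qed.

Lemma two_phase_card N : (forall s, #|burned rest_graph rest_fire S' s| <= N) ->
  forall t, #|burned e F two_phase t| <= core_bound + N.
Proof.
move=> hN t; case: (leqP t horizon) => ht.
  apply: (leq_trans (subset_leq_card (burned_early _ ht))).
  by rewrite (leq_trans core_card) ?leq_addr.
have -> : t = horizon.+1 + (t - horizon.+1) by lia.
apply: (leq_trans (subset_leq_card (burned_late _))); apply: (leq_trans (leq_card_setU _ _)).
exact: leq_add core_card (hN _).
Qed.

End TwoPhase.

Hypothesis IHc : containable pos D c.

Lemma contain_round : exists S, valid_strategy e F 1 S /\
  forall t, #|burned e F S t| <= fire_bound c.+1 D k.
Proof.
have [S' [S'_valid S'_card]] := IHc rest_graph_sym rest_graph_irr rest_graph_deg
  rest_cut_card rest_fire_card.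
exists (two_phase S'); split; first exact: two_phase_valid.
exact: two_phase_card S'_card.
Qed.

End OneRound.

Lemma containable_all (T : finType) (pos : T -> nat) (D c : nat) :
  injective pos -> (forall v, 0 < pos v) -> containable pos D c.
Proof.
move=> pinj pos_gt0; elim: c => [|c IHc]; first exact: containable0.
move=> e k F esym eirr hD hc hF.
exact: (contain_round esym eirr pos_gt0 hD hc hF IHc).
Qed.

Theorem theorem2 :
  forall f1 : nat -> nat -> nat,
  exists f2 : nat -> nat -> nat,
    (forall p d : nat, f1 p d <= f2 p d) /\
    forall (T : finType) (e : rel T), simple_graph e ->
    forall pw Delta : nat, is_pathwidth e pw -> max_degree e = Delta ->
    forall F : {set T}, #|F| <= f1 pw Delta ->
    forall b : nat, 1 <= b ->
    exists S : nat -> {set T},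
      valid_strategy e F b S /\
      forall t : nat, #|burned e F S t| <= f2 pw Delta.
Proof.
move=> f1; exists (fun p d => maxn (f1 p d) (fire_bound (p.+1 * d) d (f1 p d))).
split=> [p d|T e [esym eirr] pw Delta [[bags [hdec hwidth]] _] hdeg F hF b hb].
  exact: leq_maxl.
have hD v : #|[set u | e v u]| <= Delta by rewrite -hdeg max_degree_ge.
have hcut g : #|cut e (pd_pos bags) g| <= pw.+1 * Delta.
  by rewrite -hwidth; exact: pd_cut_card.
have [S [S_valid S_card]] :=
  containable_all (@pd_pos_inj T bags) (@pd_pos_gt0 T bags) esym eirr hD hcut hF.
exists S; split; first exact: valid_strategy_budget S_valid.
by move=> t; rewrite (leq_trans (S_card t)) ?leq_maxr.
Qed.
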